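(* Let $i_N=(\pi_N,\varphi_N):\mathcal M(N,K)\to L^-\mathrm{GL}_K\times L^-\mathrm{GL}_1$. Then $\bigcup_N i_N(\mathcal M(N,K))$ is Zariski-dense in $L^-\mathrm{GL}_K\times L^-\mathrm{GL}_1$.
   Context: $\mathcal M(N,K)=\mathrm{Rep}(N,K)/\!/\mathrm{GL}_N$, $\mathrm{Rep}(N,K)$ being triples $(B,\psi,\overline\psi)$ with $B\in\mathrm{Mat}_{N\times N}(\mathbb C)$, $\psi\in\mathrm{Mat}_{N\times K}$, $\overline\psi\in\mathrm{Mat}_{K\times N}$, and $g\cdot(B,\psi,\overline\psi)=(gBg^{-1},g\psi,\overline\psi g^{-1})$. $\widetilde B=B+\psi\overline\psi$. $L^-\mathrm{GL}_K$ is the group scheme of power series $1+\sum_{i\ge1}g_iz^{-i}$, $g_i\in\mathfrak{gl}_K$ (an infinite-dimensional affine space), similarly $L^-\mathrm{GL}_1$ for $K=1$. $\pi_N(B,\psi,\overline\psi)=1+\overline\psi(z-\widetilde B/2)^{-1}\psi$ (expanded in $z^{-1}$), and $\varphi_N(B,\psi,\overline\psi)=z^{-N}\det(z-\widetilde B)$. The maps $i_N$ are closed embeddings compatible with the embeddings $\mathcal M(N,K)\to\mathcal M(N',K)$, $(B,\psi,\overline\psi)\mapsto(\mathrm{diag}(B,0),\binom{\psi}{0},(\overline\psi\ 0))$ for $N<N'$. *)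

From HB Require Import structures.
From mathcomp Require Import all_boot all_order all_algebra.
From mathcomp Require Import complex.
From mathcomp Require Import Rstruct.
From mathcomp Require Import mpoly.
From Stdlib Require Reals.
Set Implicit Arguments.
Unset Strict Implicit.
Unset Printing Implicit Defensive.
Import GRing.Theory Num.Theory.
Local Open Scope ring_scope.

Notation CC := (complex Rdefinitions.R).

Definition Btilde (N K : nat) (B : 'M[CC]_N) (psi : 'M[CC]_(N, K))
  (psib : 'M[CC]_(K, N)) : 'M[CC]_N := B + psi *m psib.

(* Points of L^-GL_K x L^-GL_1 are recorded by their coefficient sequences:
   g : nat -> 'M_K with g i the coefficient of z^{-(i+1)} in the first factor,
   h : nat -> CC with h i the coefficient of z^{-(i+1)} in the second factor
   (the constant terms are fixed equal to 1). *)
Definition LGLpt (K : nat) : Type := ((nat -> 'M[CC]_K) * (nat -> CC))%type.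

(* pi_N(B,psi,psib) = 1 + psib (z - Bt/2)^{-1} psi
                    = 1 + sum_{i>=0} psib (Bt/2)^i psi z^{-(i+1)} *)
Definition pi_coef (N K : nat) (B : 'M[CC]_N) (psi : 'M[CC]_(N, K))
  (psib : 'M[CC]_(K, N)) (i : nat) : 'M[CC]_K :=
  psib *m (((2%:R : CC)^-1 *: Btilde B psi psib) ^+ i) *m psi.

(* phi_N(B,psi,psib) = z^{-N} det(z - Bt) = z^{-N} char_poly(Bt)(z);
   its coefficient of z^{-(i+1)} is the coefficient of z^{N-(i+1)} in the
   (monic, degree N) characteristic polynomial, and 0 if i+1 > N. *)
Definition phi_coef (N K : nat) (B : 'M[CC]_N) (psi : 'M[CC]_(N, K))
  (psib : 'M[CC]_(K, N)) (i : nat) : CC :=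
  if (i < N)%N then (char_poly (Btilde B psi psib))`_(N - i.+1)%N else 0.

Definition iN (N K : nat) (B : 'M[CC]_N) (psi : 'M[CC]_(N, K))
  (psib : 'M[CC]_(K, N)) : LGLpt K :=
  (pi_coef B psi psib, phi_coef B psi psib).

(* Coordinate functions on the infinite-dimensional affine space
   L^-GL_K x L^-GL_1: the (a,b) entry of g_{i+1}, or h_{i+1}. *)
Definition coord (K : nat) : Type := ((nat * 'I_K * 'I_K) + nat)%type.

Definition coordval (K : nat) (x : LGLpt K) (c : coord K) : CC :=
  match c with
  | inl (i, a, b) => x.1 i a b
  | inr i => x.2 i
  end.

(* Zariski density in the infinite-dimensional affine space: every regular
   function (a polynomial in finitely many distinct coordinates) vanishing on
   S is the zero polynomial. *)
Definition zariski_dense (K : nat) (S : LGLpt K -> Prop) : Prop :=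
  forall (n : nat) (c : 'I_n -> coord K) (P : {mpoly CC[n]}),
    injective c ->
    (forall x, S x -> mpoly.meval (fun j => coordval x (c j)) P = 0) ->
    P = 0.

(* The union over N of the images i_N(M(N,K)); since the GIT quotient map
   Rep(N,K) -> M(N,K) is surjective and i_N is induced by GL_N-invariant maps,
   this is the union of the images of Rep(N,K). *)
Definition union_image (K : nat) (x : LGLpt K) : Prop :=
  exists (N : nat) (B : 'M[CC]_N) (psi : 'M[CC]_(N, K)) (psib : 'M[CC]_(K, N)),
    x = iN B psi psib.

From Pilot Require Import Defs.
From mathcomp Require Import all_boot all_algebra complex Rstruct mpoly zify.
Import GRing.Theory Num.Theory.
Local Open Scope ring_scope.

(* A regular function involves finitely many coordinates, all among the
   coefficients g_1..g_m, h_1..h_m for some m; since a polynomial vanishing on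
   all of C^n is zero, it suffices that every such truncation is attained by
   some i_N.  With A = Btilde, the coefficients of i_N are psib (A/2)^i psi and
   the top coefficients of char_poly A.  Any finite sequence g_0..g_(m-1) is
   realised as psib A^i psi with char_poly A = X^s q for a prescribed monic q:
   start from the companion matrix of q and pass repeatedly to
   A' = [[A, psi], [0, 0]], psi' = [0; 1], psib' = [psib, g_0], which shifts the
   realised sequence by one and multiplies the characteristic polynomial by
   X^K.  Then B := A - psi psib has Btilde = A. *)

Lemma eq_mpoly_rmorph {R : nzRingType} {S : pzRingType} {n : nat}
    (f g : {rmorphism {mpoly R[n]} -> S}) :
  (forall c, f c%:MP = g c%:MP) -> (forall i, f 'X_i = g 'X_i) -> f =1 g.
Proof.
move=> eqC eqX p; rewrite (mpolyE p) !rmorph_sum; apply: eq_bigr => m _.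
rewrite -mul_mpolyC !rmorphM eqC mpolyXE_id !rmorph_prod; congr (_ * _).
by apply: eq_bigr => i _; rewrite !rmorphXn eqX.
Qed.

Section MPolyUnivariate.
Variable R : comNzRingType.
Local Notation widen := (widen_ord (leqnSn _)).

Lemma mmap_muni n (S : comNzRingType) (f : {rmorphism R -> S})
    (h : 'I_n.+1 -> S) (p : {mpoly R[n.+1]}) :
  mmap f h p = (map_poly (mmap f (h \o widen)) (muni p)).[h ord_max].
Proof.
move: p; apply: (eq_mpoly_rmorph (mmap f h)
  (horner_eval (h ord_max) \o map_poly (mmap f (h \o widen)) \o @muni n R))
  => [c | i] /=.
  by rewrite muniC map_polyC /= /horner_eval hornerC !mmapC.
rewrite /horner_eval /muni !mmapX !mmap1U.
case: splitP => j ij.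
  rewrite map_polyC hornerC [RHS]mmapX mmap1U.
  by congr h; apply: val_inj; rewrite /= -ij.
rewrite map_polyX hornerX; congr h; apply: val_inj.
by move: ij; rewrite (ord1 j) addn0.
Qed.

Lemma mmap_mpolyC_X n (p : {mpoly R[n]}) :
  mmap (@mpolyC n R) (fun i => 'X_i) p = p.
Proof.
by move: p; apply: (eq_mpoly_rmorph _ idfun) => [c | i] /=;
  rewrite ?mmapC // mmapX mmap1U.
Qed.

Lemma muni_inj n : injective (@muni n R).
Proof.
by move=> p q eq_pq; rewrite -[p]mmap_mpolyC_X -[q]mmap_mpolyC_X !mmap_muni eq_pq.
Qed.

Lemma meval_muni n (v : 'I_n.+1 -> R) (p : {mpoly R[n.+1]}) :
  meval v p = (map_poly (meval (v \o widen)) (muni p)).[v ord_max].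
Proof. exact: mmap_muni. Qed.

End MPolyUnivariate.

Section PolynomialIdentity.
Variable R : numDomainType.

Lemma poly_eq0_of_horner (q : {poly R}) : (forall x, q.[x] = 0) -> q = 0.
Proof.
move=> q0; apply: (@roots_geq_poly_eq0 _ _ [seq i%:R | i <- iota 0 (size q)]).
- by apply/allP => x _; apply/rootP.
- by rewrite map_inj_uniq ?iota_uniq // => i j /eqP; rewrite eqr_nat => /eqP.
- by rewrite size_map size_iota.
Qed.

Lemma mpoly_eq0_of_meval n (p : {mpoly R[n]}) :
  (forall v, meval v p = 0) -> p = 0.
Proof.
elim: n p => [|n IHn] p p0.
  have := p0 (fun=> 0); rewrite {1}(nvar0_mpolyC p) mevalC => p00.
  by rewrite (nvar0_mpolyC p) p00 mpolyC0.
apply: muni_inj; rewrite rmorph0; apply/polyP => k; rewrite coef0.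
apply: IHn => w; rewrite -coef_map.
suff -> : map_poly (meval w) (muni p) = 0 by rewrite coef0.
apply: poly_eq0_of_horner => x.
pose v i := if unlift ord_max i is Some j then w j else x.
have vE : v \o widen_ord (leqnSn n) =1 w.
  move=> j /=; have -> : widen_ord (leqnSn n) j = lift ord_max j.
    exact/val_inj/esym/lift_max.
  by rewrite /v liftK.
have vmax : v ord_max = x by rewrite /v unlift_none.
by rewrite -(eq_map_poly (fun r => meval_eq r vE)) -vmax -meval_muni p0.
Qed.

End PolynomialIdentity.

Section Realization.
Context {R : comNzRingType}.

Lemma char_poly_ublock0 N K (A : 'M[R]_N) (B : 'M_(N, K)) :
  char_poly (block_mx A B 0 (0 : 'M_K)) = char_poly A * 'X^K.
Proof.
rewrite /char_poly /char_poly_mx map_block_mx !map_mx0 scalar_mx_block.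
by rewrite opp_block_mx add_block_mx !oppr0 !add0r !addr0 det_ublock det_scalar.
Qed.

Lemma exprZn_mx N (a : R) (A : 'M[R]_N) i : (a *: A) ^+ i = a ^+ i *: A ^+ i.
Proof.
elim: i => [|i IHi]; first by rewrite !expr0 scale1r.
by rewrite !exprS IHi -!mulmxE -scalemxAl -scalemxAr scalerA.
Qed.

Lemma exists_realization K (q : {poly R}) m (g : nat -> 'M[R]_K) :
    q \is monic ->
  exists N (A : 'M[R]_N) (psi : 'M_(N, K)) (psib : 'M_(K, N)) s,
    char_poly A = 'X^s * q /\
    forall i, (i < m)%N -> psib *m A ^+ i *m psi = g i.
Proof.
move=> q_monic; elim: m g => [|m IHm] g.
  by exists (size q).-1, (companionmx q), 0, 0, 0%N; rewrite companionmxK // mul1r.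
have [N [A [psi [psib [s [charA gE]]]]]] := IHm (g \o succn).
pose A' := block_mx A psi 0 (0 : 'M_K).
pose psi' : 'M[R]_(N + K, K) := col_mx 0 1%:M.
exists (N + K)%N, A', psi', (row_mx psib (g 0%N)), (s + K)%N; split.
  by rewrite char_poly_ublock0 charA exprD -!mulrA [q * _]mulrC.
have A'psi' i : A' ^+ i.+1 *m psi' = col_mx (A ^+ i *m psi) 0.
  elim: i => [|i IHi].
    by rewrite expr1 expr0 mul1mx mul_block_col !mulmx0 mul0mx mulmx1 !add0r.
  by rewrite exprS -mulmxE -mulmxA IHi mul_block_col !mulmx0 !mul0mx !addr0
    exprS -mulmxE mulmxA.
case=> [|i] lt_im.
  by rewrite expr0 mulmx1 mul_row_col mulmx0 add0r mulmx1.
by rewrite -mulmxA A'psi' mul_row_col mulmx0 addr0 mulmxA gE.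
Qed.

End Realization.

Lemma exists_monic_top_coefs {R : nzRingType} m (h : nat -> R) :
  exists q : {poly R},
    [/\ q \is monic, size q = m.+1
      & forall i, (i < m)%N -> q`_(m - i.+1)%N = h i].
Proof.
pose r := \poly_(k < m) h (m - k.+1)%N.
have size_r : (size r < size ('X^m : {poly R}))%N.
  by rewrite size_polyXn ltnS size_poly.
exists ('X^m + r); split.
- by rewrite monicE lead_coefDl // lead_coefXn.
- by rewrite size_polyDl // size_polyXn.
- move=> i lt_im; rewrite coefD coefXn coef_poly.
  have -> : (m - i.+1 == m)%N = false by apply/eqP; lia.
  have -> : (m - i.+1 < m)%N by lia.
  by rewrite add0r; congr h; lia.
Qed.

Lemma iN_interpolates K m (g : nat -> 'M[CC]_K) (h : nat -> CC) :
  exists N (B : 'M[CC]_N) (psi : 'M_(N, K)) (psib : 'M_(K, N)),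
    (forall i, (i < m)%N -> pi_coef B psi psib i = g i) /\
    (forall i, (i < m)%N -> phi_coef B psi psib i = h i).
Proof.
have [q [q_monic size_q qE]] := exists_monic_top_coefs m h.
(* Realising 2^i g_i absorbs the factor 1/2 in pi_coef. *)
have [N [A [psi [psib [s [charA gE]]]]]] :=
  exists_realization K q m (fun i => 2%:R ^+ i *: g i) q_monic.
have BtE : Btilde (A - psi *m psib) psi psib = A by rewrite /Btilde subrK.
have N_eq : N = (s + m)%N.
  have := size_char_poly A; rewrite charA size_monicM ?monicXn ?monic_neq0 //.
  by rewrite size_polyXn size_q; lia.
exists N, (A - psi *m psib), psi, psib; split => i lt_im.
  rewrite /pi_coef BtE exprZn_mx -scalemxAr -scalemxAl gE // scalerA -exprMn.
  by rewrite mulVf ?pnatr_eq0 // expr1n scale1r.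
have lt_iN : (i < N)%N by lia.
rewrite /phi_coef BtE charA lt_iN coefXnM ifF; last by lia.
have -> : (N - i.+1 - s = m - i.+1)%N by lia.
exact: qE.
Qed.

Definition coord_index {K : nat} (c : Defs.coord K) : nat :=
  match c with inl (i, _, _) => i | inr i => i end.

Lemma coordval_surj K (w : Defs.coord K -> CC) :
  exists x : LGLpt K, coordval x =1 w.
Proof.
exists (fun i => \matrix_(a, b) w (inl (i, a, b)), fun i => w (inr i)).
by case=> [[[i a] b] | i] /=; rewrite ?mxE.
Qed.

Lemma zariski_dense_of_truncations K (S : LGLpt K -> Prop) :
    (forall m (x : LGLpt K), exists2 y, S y &
       forall c, (coord_index c < m)%N -> coordval y c = coordval x c) ->
  zariski_dense S.
Proof.
move=> approx n c P c_inj P0; apply: mpoly_eq0_of_meval => v.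
pose w (d : Defs.coord K) := if [pick j | c j == d] is Some j then v j else 0.
have [x xE] := coordval_surj K w.
have [y Sy yE] := approx (\max_(j < n) coord_index (c j)).+1 x.
rewrite -(P0 y Sy); apply: meval_eq => j.
rewrite yE ?ltnS ?(leq_bigmax (F := fun j => coord_index (c j))) // xE /w.
by case: pickP => [j' /eqP/c_inj -> // | /(_ j)]; rewrite eqxx.
Qed.

Theorem mainTheorem5 (K : nat) : zariski_dense (@union_image K).
Proof.
apply: zariski_dense_of_truncations => m [g h].
have [N [B [psi [psib [piE phiE]]]]] := iN_interpolates K m g h.
exists (iN B psi psib); first by exists N, B, psi, psib.
by case=> [[[i a] b] | i] /= lt_im; rewrite ?piE ?phiE.
Qed.
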